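(* Let $k>\ell\ge1$, $m\ge1$, $w=a^kba^\ell b^m$, and for $n\ge1$ let $S_n = a^kba^\ell a^{k}b a^{\ell}b^{m} (a^k b^{m+1}a^\ell)^n a^{k}b a^{\ell}b^{m} b^m$. For all integers $i,j\ge1$, $S_i\vdash^*_{\{w\}} S_j$ if and only if $i=j$.
   Context: For words $u,v$, the shuffle $u \sqcup\!\sqcup v$ is the set of all words $u_1v_1\cdots u_kv_k$ with $k\ge 1$, $u=u_1\cdots u_k$, $v=v_1\cdots v_k$ (pieces possibly empty). For a finite set $I$ of words, $v \vdash_I w$ means $w \in v \sqcup\!\sqcup u$ for some $u\in I$, and $\vdash_I^*$ is its reflexive-transitive closure. *)

From Stdlib Require Import Relations List.
From mathcomp Require Import all_boot.
Set Implicit Arguments. Unset Strict Implicit. Unset Printing Implicit Defensive.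

Inductive letter := la | lb.

Definition word := seq letter.

Definition pw (x : word) (n : nat) : word := flatten (nseq n x).

Fixpoint interleave (us vs : seq word) : word :=
  match us, vs with
  | u :: us', v :: vs' => u ++ v ++ interleave us' vs'
  | _, _ => [::]
  end.

(* w \in u ⧢ v : w = u_1 v_1 ... u_k v_k, k >= 1, u = u_1...u_k, v = v_1...v_k,
   pieces possibly empty. *)
Definition in_shuffle (w u v : word) : Prop :=
  exists (us vs : seq word),
    [/\ 1 <= size us, size us = size vs,
        flatten us = u, flatten vs = v & w = interleave us vs].

(* v |-_I w  :  w \in v ⧢ u for some u \in I (I a finite set of words, as a list) *)
Definition derives1 (I : seq word) (v w : word) : Prop :=
  exists u, List.In u I /\ in_shuffle w v u.

Definition derives (I : seq word) : word -> word -> Prop :=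
  clos_refl_trans word (derives1 I).

Definition wa (n : nat) : word := nseq n la.
Definition wb (n : nat) : word := nseq n lb.

Definition w_klm (k l m : nat) : word := wa k ++ [:: lb] ++ wa l ++ wb m.

Definition S_klm (k l m n : nat) : word :=
  wa k ++ [:: lb] ++ wa l ++ wa k ++ [:: lb] ++ wa l ++ wb m
  ++ pw (wa k ++ wb m.+1 ++ wa l) n
  ++ wa k ++ [:: lb] ++ wa l ++ wb m ++ wb m.

(* Weigh a with m+1 and b with -(k+l).  Then w has weight 0 and every proper
   nonempty prefix of w has positive weight.  Along a derivation S_i |-* S_j we
   tag each letter as inherited from S_i or inserted: in every prefix the
   inserted letters weigh at least 0, and a factor of inserted letters only, of
   weight 0 and starting where the inserted letters so far weigh 0, is derivable
   from the empty word, hence is empty or contains ba.  Counting the inherited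
   letters in each prefix of S_j gives a monotone map q from prefix lengths of
   S_j to those of S_i that does not increase weight.  The prefixes of S_n of
   minimal weight km-l end exactly after its n blocks a^k b^(m+1), so q maps
   minima of S_j to minima of S_i, injectively because consecutive minima are
   separated by a^(l+k) b^(m+1), which has no ba.  Since S_i embeds in S_j we
   have i <= j, and a length count shows that the last i+1 minima of S_j are
   mapped to minima of S_i, which forces i = j. *)

From HB Require Import structures.
From Stdlib Require Import Relations ZArith Lia.
From mathcomp Require Import all_boot zify.
Set Implicit Arguments. Unset Strict Implicit.

Definition letter_eqb (x y : letter) : bool :=
  match x, y with la, la | lb, lb => true | _, _ => false end.

Lemma letter_eqP : Equality.axiom letter_eqb.
Proof. by do 2 case; constructor. Qed.

HB.instance Definition _ := hasDecEq.Build letter letter_eqP.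

Fixpoint ilv {T : Type} (us vs : seq (seq T)) : seq T :=
  match us, vs with
  | u :: us', v :: vs' => u ++ v ++ ilv us' vs'
  | _, _ => [::]
  end.

Lemma interleave_ilv us vs : interleave us vs = ilv us vs.
Proof. by elim: us vs => [|u us IH] [|v vs] //=; rewrite IH. Qed.

Lemma ilv_flatten_nil {T : Type} (us vs : seq (seq T)) : size us = size vs ->
  flatten vs = [::] -> ilv us vs = flatten us.
Proof.
elim: us vs => [|u us IH] [|v vs] //= [Hs] /List.app_eq_nil [-> Hvs].
by rewrite IH.
Qed.

Lemma ilv_eq_cat {T : Type} (us vs : seq (seq T)) x y :
  size us = size vs -> ilv us vs = x ++ y ->
  exists us1 vs1 us2 vs2,
    [/\ size us1 = size vs1, size us2 = size vs2, x = ilv us1 vs1, y = ilv us2 vs2 &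
        flatten us = flatten us1 ++ flatten us2 /\ flatten vs = flatten vs1 ++ flatten vs2].
Proof.
elim: us vs x y => [|u us IH] [|v vs] //= x y.
  by move=> _ /esym/List.app_eq_nil [-> ->]; exists [::], [::], [::], [::].
move=> [Hs] E.
have Ex : x = take (size x) (u ++ v ++ ilv us vs) by rewrite E take_size_cat.
have Ey : y = drop (size x) (u ++ v ++ ilv us vs) by rewrite E drop_size_cat.
case: (ltnP (size x) (size u)) => Hu.
  exists [:: take (size x) u], [:: [::]], (drop (size x) u :: us), (v :: vs).
  rewrite /= !cats0 Hs; split=> //.
  - by rewrite {1}Ex take_cat Hu.
  - by rewrite {1}Ey drop_cat Hu.
  - by rewrite catA cat_take_drop.
set n := size x - size u.
case: (ltnP n (size v)) => Hv.
  exists [:: u], [:: take n v], ([::] :: us), (drop n v :: vs).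
  rewrite /= !cats0 Hs; split=> //.
  - by rewrite {1}Ex take_cat ltnNge Hu /= take_cat Hv.
  - by rewrite {1}Ey drop_cat ltnNge Hu /= drop_cat Hv.
  - by rewrite catA cat_take_drop.
set x' := take (n - size v) (ilv us vs).
have Ex' : x = u ++ v ++ x' by rewrite {1}Ex take_cat ltnNge Hu /= take_cat ltnNge Hv.
have Ey' : y = drop (n - size v) (ilv us vs)
  by rewrite {1}Ey drop_cat ltnNge Hu /= drop_cat ltnNge Hv.
have E' : ilv us vs = x' ++ y by rewrite Ey' cat_take_drop.
have [us1 [vs1 [us2 [vs2 [S1 S2 X1 Y1 [F1 F2]]]]]] := IH _ _ _ Hs E'.
exists (u :: us1), (v :: vs1), us2, vs2; rewrite /= S1 Ex' X1 F1 F2 !catA.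
by split.
Qed.

Lemma size_pw (X : word) n : size (pw X n) = n * size X.
Proof. by elim: n => //= n IH; rewrite /pw /= size_cat -/(pw X n) IH mulSn. Qed.

Lemma pwS (X : word) n : pw X n.+1 = X ++ pw X n.
Proof. by []. Qed.

Lemma pwD (X : word) n1 n2 : pw X (n1 + n2) = pw X n1 ++ pw X n2.
Proof. by rewrite /pw nseqD flatten_cat. Qed.

Section Weight.

Variables M C : Z.

Fixpoint weight (s : word) : Z :=
  match s with
  | [::] => 0%Z
  | la :: t => (M + weight t)%Z
  | lb :: t => (weight t - C)%Z
  end.

Lemma weight_cat s t : weight (s ++ t) = (weight s + weight t)%Z.
Proof. by elim: s => [|[] s IH] /=; lia. Qed.

Lemma weight_wa n : weight (wa n) = (Z.of_nat n * M)%Z.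
Proof. by elim: n => [|n IH] //; rewrite Nat2Z.inj_succ /= IH; lia. Qed.

Lemma weight_wb n : weight (wb n) = (- Z.of_nat n * C)%Z.
Proof. by elim: n => [|n IH] //; rewrite Nat2Z.inj_succ /= IH; lia. Qed.

Lemma weight_take_cat p s t : weight (take p (s ++ t)) =
  if p <= size s then weight (take p s)
  else (weight s + weight (take (p - size s) t))%Z.
Proof.
rewrite take_cat; case: (ltnP p (size s)) => [/ltnW -> //|Hp].
case: (eqVneq p (size s)) => [->|ne].
  by rewrite leqnn subnn take0 cats0 take_size.
by rewrite leqNgt ltn_neqAle eq_sym ne Hp weight_cat.
Qed.

Lemma take_nseq_min {T : Type} p n (x : T) : take p (nseq n x) = nseq (minn p n) x.
Proof. by elim: n p => [|n IH] [|p] //=; rewrite ?minn0 ?minnSS ?IH. Qed.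

Lemma weight_take_wa p n : weight (take p (wa n)) = (Z.of_nat (minn p n) * M)%Z.
Proof. by rewrite /wa take_nseq_min weight_wa. Qed.

Lemma weight_take_wb p n : weight (take p (wb n)) = (- Z.of_nat (minn p n) * C)%Z.
Proof. by rewrite /wb take_nseq_min weight_wb. Qed.

Lemma weight_pw (X : word) n : weight X = 0%Z -> weight (pw X n) = 0%Z.
Proof. by move=> HX; elim: n => //= n IH; rewrite weight_cat HX IH. Qed.

Lemma weight_take_pw (X t : word) n x s : weight X = 0%Z -> x <= n ->
  weight (take (x * size X + s) (pw X n ++ t)) = weight (take s (pw X (n - x) ++ t)).
Proof.
move=> HX; elim: x n => [|x IH] n Hx; first by rewrite mul0n add0n subn0.
case: n Hx => // n Hx.
rewrite mulSn -addnA /pw /= -/(pw X n) -catA takeD take_size_cat //.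
by rewrite drop_size_cat // weight_cat HX IH.
Qed.

Definition dyck (w : word) := forall w1 w2, w1 ++ w2 = w ->
  (0 <= weight w1)%Z /\ (weight w1 = 0%Z -> w1 = [::] \/ w2 = [::]).

Lemma dyck_zero_factor w w1 w2 w3 : dyck w -> w1 ++ w2 ++ w3 = w ->
  weight w1 = 0%Z -> weight w2 = 0%Z -> w2 = [::] \/ w2 = w.
Proof.
move=> dyck_w E e1 e2.
have [_ /(_ e1) H1] := dyck_w _ _ E.
have [_ H12] := dyck_w (w1 ++ w2) w3 (etrans (esym (catA _ _ _)) E).
rewrite weight_cat e1 e2 in H12.
case: (H12 erefl) => [/List.app_eq_nil [_ ->]|H3]; first by left.
case: H1 => [H1|/List.app_eq_nil [-> _]]; last by left.
by right; rewrite -E H1 H3 cats0.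
Qed.

End Weight.

(* A letter tagged [true] is inherited from the starting word, one tagged
   [false] was inserted by the derivation; [weight (erase z) - weight (origin z)]
   is the weight of the inserted letters of [z]. *)
Definition tword := seq (letter * bool).
Definition erase (z : tword) : word := map fst z.
Definition origin (z : tword) : word := map fst (filter snd z).
Definition kept (s : word) : tword := map (fun x => (x, true)) s.
Definition fresh (s : word) : tword := map (fun x => (x, false)) s.

Lemma erase_cat z1 z2 : erase (z1 ++ z2) = erase z1 ++ erase z2.
Proof. exact: map_cat. Qed.

Lemma origin_cat z1 z2 : origin (z1 ++ z2) = origin z1 ++ origin z2.
Proof. by rewrite /origin filter_cat map_cat. Qed.

Lemma origin_cat_nil z1 z2 : origin (z1 ++ z2) = [::] -> origin z1 = [::] /\ origin z2 = [::].
Proof. by rewrite origin_cat => /List.app_eq_nil. Qed.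

Lemma erase_flatten (zs : seq tword) : erase (flatten zs) = flatten (map erase zs).
Proof. by elim: zs => [|z zs IH] //=; rewrite erase_cat IH. Qed.

Lemma erase_ilv (zs ws : seq tword) : erase (ilv zs ws) = ilv (map erase zs) (map erase ws).
Proof. by elim: zs ws => [|z zs IH] [|v vs] //=; rewrite !erase_cat IH. Qed.

Lemma origin_ilv (zs ws : seq tword) : size zs = size ws ->
  origin (flatten ws) = [::] -> origin (ilv zs ws) = origin (flatten zs).
Proof.
elim: zs ws => [|z zs IH] [|v vs] //= [Hs] /origin_cat_nil [Hv Hvs].
by rewrite !origin_cat Hv IH.
Qed.

Lemma erase_kept s : erase (kept s) = s.
Proof. by elim: s => //= x s ->. Qed.

Lemma origin_kept s : origin (kept s) = s.
Proof. by rewrite /origin; elim: s => //= x s ->. Qed.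

Lemma erase_fresh s : erase (fresh s) = s.
Proof. by elim: s => //= x s ->. Qed.

Lemma origin_fresh s : origin (fresh s) = [::].
Proof. by rewrite /origin; elim: s. Qed.

Lemma size_origin z : size (origin z) <= size z.
Proof. by rewrite size_map size_filter count_size. Qed.

Lemma weight_erase_ilv M C (zs ws : seq tword) : size zs = size ws ->
  weight M C (erase (ilv zs ws)) =
  (weight M C (erase (flatten zs)) + weight M C (erase (flatten ws)))%Z.
Proof.
elim: zs ws => [|z zs IH] [|v vs] //= [Hs].
by rewrite !erase_cat !weight_cat IH //; lia.
Qed.

Section Tracking.

Variables (M C : Z) (w : word).
Hypothesis dyck_w : dyck M C w.
Local Notation weight := (weight M C).

Definition inserted_prefix_nonneg (z : tword) := forall z1 z2, z = z1 ++ z2 ->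
  (weight (origin z1) <= weight (erase z1))%Z.

Definition inserted_factor_derivable (z : tword) := forall z1 z2 z3,
  z = z1 ++ z2 ++ z3 -> weight (erase z1) = weight (origin z1) ->
  weight (erase z2) = 0%Z -> origin z2 = [::] -> derives [:: w] [::] (erase z2).

Definition tracked (Si v : word) := exists z : tword,
  [/\ erase z = v, origin z = Si, inserted_prefix_nonneg z & inserted_factor_derivable z].

Lemma prefix_nonneg_ilv (zs ws : seq tword) : size zs = size ws ->
  flatten ws = fresh w -> inserted_prefix_nonneg (flatten zs) ->
  inserted_prefix_nonneg (ilv zs ws).
Proof.
move=> Hs Fws Pz z1 z2 E.
have [A1 [B1 [A2 [B2 [S1 S2 -> _ [F1 F2]]]]]] := ilv_eq_cat Hs E.
have /origin_cat_nil [OB1 _] : origin (flatten B1 ++ flatten B2) = [::].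
  by rewrite -F2 Fws origin_fresh.
rewrite (origin_ilv S1 OB1) weight_erase_ilv //.
have := Pz _ _ F1.
have [] := @dyck_w (erase (flatten B1)) (erase (flatten B2)).
  by rewrite -erase_cat -F2 Fws erase_fresh.
lia.
Qed.

Lemma factor_derivable_ilv (zs ws : seq tword) : size zs = size ws ->
  flatten ws = fresh w -> inserted_prefix_nonneg (flatten zs) ->
  inserted_factor_derivable (flatten zs) -> inserted_factor_derivable (ilv zs ws).
Proof.
move=> Hs Fws Pz Fz z1 z2 z3 E e1 e2 e3.
have [A1 [B1 [R1 [R2 [S1 SR Ez1 Y [F1 F2]]]]]] := ilv_eq_cat Hs E.
have [A2 [B2 [A3 [B3 [S2 S3 Ez2 _ [G1 G2]]]]]] := ilv_eq_cat SR (esym Y).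
rewrite G1 in F1; rewrite G2 in F2.
have /origin_cat_nil [OB1 /origin_cat_nil [OB2 _]] :
    origin (flatten B1 ++ flatten B2 ++ flatten B3) = [::].
  by rewrite -F2 Fws origin_fresh.
have Ew : erase (flatten B1) ++ erase (flatten B2) ++ erase (flatten B3) = w.
  by rewrite -!erase_cat -F2 Fws erase_fresh.
rewrite Ez2 in e2 e3 *.
rewrite Ez1 (origin_ilv S1 OB1) weight_erase_ilv // in e1.
rewrite weight_erase_ilv // in e2.
rewrite (origin_ilv S2 OB2) in e3.
have p1 := Pz _ _ F1.
have := Pz (flatten A1 ++ flatten A2) (flatten A3) (etrans F1 (catA _ _ _)).
rewrite origin_cat e3 cats0 erase_cat weight_cat => p12.
have [d1 _] := @dyck_w _ _ Ew.
have [d12 _] := @dyck_w (erase (flatten B1) ++ erase (flatten B2)) _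
  (etrans (esym (catA _ _ _)) Ew).
rewrite weight_cat in d12.
(* The old inserted letters and the new copy of [w] both weigh at least 0 in
   every prefix, so both weigh exactly 0 before and within the factor. *)
have eA1 : weight (erase (flatten A1)) = weight (origin (flatten A1)) by lia.
have eA2 : weight (erase (flatten A2)) = 0%Z by lia.
have DA2 := Fz _ _ _ F1 eA1 eA2 e3.
have [||B2nil|B2w] := dyck_zero_factor dyck_w Ew; try lia.
  by rewrite erase_ilv ilv_flatten_nil ?size_map // -erase_flatten.
case HA2: A2 => [|a A2']; first exact: rt_refl.
rewrite -HA2.
apply: rt_trans DA2 _; apply: rt_step; exists w; split; first by left.
exists (map erase A2), (map erase B2); split.
- by rewrite HA2.
- by rewrite !size_map.
- by rewrite erase_flatten.
- by rewrite -erase_flatten.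
- by rewrite erase_ilv interleave_ilv.
Qed.

Lemma tracked_step Si v v' : derives1 [:: w] v v' -> tracked Si v -> tracked Si v'.
Proof.
move=> [u [Hin [us [vs [_ Hsize Hus Hvs ->]]]]] [z [Ez Oz Pz Fz]].
have {Hin} Hu : u = w by case: Hin => // -[].
set zs := reshape (shape us) z.
set ws := map fresh vs.
have Hszs : size zs = size ws by rewrite /zs /ws size_reshape !size_map.
have Fzs : flatten zs = z.
  by apply: reshapeKr; rewrite -(size_map fst) -/(erase z) Ez -Hus size_flatten.
have Ezs : map erase zs = us.
  by rewrite /zs /erase map_reshape -/(erase z) Ez -Hus flattenK.
have Ews : map erase ws = vs.
  by rewrite /ws -map_comp (eq_map erase_fresh) map_id.
have Fws : flatten ws = fresh w by rewrite /ws /fresh -Hu -Hvs map_flatten.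
exists (ilv zs ws); split.
- by rewrite erase_ilv Ezs Ews interleave_ilv.
- by rewrite origin_ilv ?Fzs ?Fws ?origin_fresh.
- by apply: prefix_nonneg_ilv; rewrite ?Fzs.
- by apply: factor_derivable_ilv; rewrite ?Fzs.
Qed.

Lemma tracked_refl Si : tracked Si Si.
Proof.
have kept_factor z1 z2 z3 : kept Si = z1 ++ z2 ++ z3 -> origin z2 = erase z2.
  have : all snd (kept Si) by rewrite /kept; elim: Si => //= x s ->.
  by move=> + E; rewrite E !all_cat => /and3P [_ /all_filterP Hz2 _]; rewrite /origin Hz2.
exists (kept Si); split; rewrite ?erase_kept ?origin_kept //.
- by move=> z1 z2 /(kept_factor [::]) ->; lia.
- by move=> z1 z2 z3 /kept_factor -> _ _ ->; apply: rt_refl.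
Qed.

Lemma tracked_derives Si v v' : derives [:: w] v v' -> tracked Si v -> tracked Si v'.
Proof.
elim=> {v v'} [v v' Hstep|//|v1 v2 v3 _ IH1 _ IH2].
- exact: tracked_step.
- by move=> /IH1 /IH2.
Qed.

(* [q p] counts the letters among the first [p] letters of [Sj] that descend
   from [Si]. *)
Definition embedding (Si Sj : word) (q : nat -> nat) :=
  [/\ q 0 = 0,
      forall p, (weight (take (q p) Si) <= weight (take p Sj))%Z,
      forall p1 p2, p1 <= p2 -> q p1 <= q p2 <= q p1 + (p2 - p1),
      forall p, p <= size Sj -> size Si <= q p + (size Sj - p) &
      forall p1 p2, p1 <= p2 -> q p1 = q p2 ->
        weight (take p1 Sj) = weight (take (q p1) Si) ->
        weight (take p2 Sj) = weight (take p1 Sj) ->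
        derives [:: w] [::] (drop p1 (take p2 Sj))].

Lemma tracked_embedding Si Sj : tracked Si Sj -> exists q, embedding Si Sj q.
Proof.
move=> [z [Ez Oz Pz Fz]].
have take_split p1 p2 : p1 <= p2 -> take p2 z = take p1 z ++ drop p1 (take p2 z).
  by move=> Hp; rewrite -{1}(cat_take_drop p1 (take p2 z)) take_takel.
have Ot p : origin (take p z) = take (size (origin (take p z))) Si.
  by rewrite -Oz -{3}(cat_take_drop p z) origin_cat take_size_cat.
have Et p : erase (take p z) = take p Sj by rewrite -Ez /erase map_take.
exists (fun p => size (origin (take p z))); split.
- by rewrite take0.
- by move=> p; rewrite -Ot -Et; apply: (Pz _ (drop p z)); rewrite cat_take_drop.
- move=> p1 p2 Hp; rewrite (take_split _ _ Hp) origin_cat size_cat leq_addr leq_add2l /=.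
  apply: leq_trans (size_origin _) _.
  by rewrite size_drop size_take_min leq_sub2r ?geq_minl.
- move=> p Hp.
  have : size (origin z) = size (origin (take p z)) + size (origin (drop p z)).
    by rewrite -size_cat -origin_cat cat_take_drop.
  rewrite Oz => ->; rewrite leq_add2l; apply: leq_trans (size_origin _) _.
  by rewrite size_drop -Ez size_map.
- move=> p1 p2 Hp Eq E1 E2.
  set seg := drop p1 (take p2 z).
  have Ez3 : z = take p1 z ++ seg ++ drop p2 z.
    by rewrite catA -take_split // cat_take_drop.
  have Oseg : origin seg = [::].
    apply/size0nil; apply/eqP; rewrite -(eqn_add2l (size (origin (take p1 z)))) addn0.
    by rewrite -size_cat -origin_cat -take_split // Eq.
  have <- : erase seg = drop p1 (take p2 Sj) by rewrite /seg /erase map_drop map_take -/(erase z) Ez.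
  apply: (Fz _ _ _ Ez3) => //; first by rewrite Et E1 -Ot.
  have := congr1 weight (Et p2).
  by rewrite (take_split _ _ Hp) erase_cat weight_cat Et E2 -/seg; lia.
Qed.

End Tracking.

Definition leab (x y : letter) : bool := (x == la) || (y == lb).

Lemma leab_trans : transitive leab.
Proof. by do 3 case. Qed.

Lemma subseq_ilv {T : eqType} (us vs : seq (seq T)) : size us = size vs ->
  subseq (flatten vs) (ilv us vs).
Proof.
elim: us vs => [|u us IH] [|v vs] //= [Hs].
by rewrite catA; apply: cat_subseq (suffix_subseq _ _) (IH _ Hs).
Qed.

Lemma derives_from_nil_unsorted w x : ~~ sorted leab w ->
  derives [:: w] [::] x -> x = [::] \/ ~~ sorted leab x.
Proof.
move=> Hw D; destruct (clos_rt_rtn1 _ _ _ _ D) as [|y x' Hstep _]; first by left.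
move: Hstep => [u [Hin [us [vs [_ Hs _ Hvs ->]]]]].
have {Hin} Hu : u = w by case: Hin => // -[].
right; apply: contra Hw; rewrite interleave_ilv -Hu -Hvs.
exact/(subseq_sorted leab_trans)/subseq_ilv.
Qed.

Section Words.

Variables k l m : nat.
Hypotheses (lt_lk : l < k) (l_gt0 : 0 < l) (m_gt0 : 0 < m).

Local Notation M := (Z.of_nat m + 1)%Z.
Local Notation C := (Z.of_nat k + Z.of_nat l)%Z.
Local Notation weight := (weight M C).
(* the least weight of a prefix of [S_klm k l m n], reached after [a^k b] *)
Local Notation wmin := (Z.of_nat k * M - C)%Z.
Local Notation L := (k + l + m + 1).
Local Notation w := (w_klm k l m).
Local Notation S := (S_klm k l m).

Definition block := wa k ++ wb m.+1 ++ wa l.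
Definition S_pre := wa k ++ [:: lb] ++ wa l ++ wa k ++ [:: lb] ++ wa l ++ wb m.
Definition S_suf := w ++ wb m.

Lemma S_split n : S n = S_pre ++ pw block n ++ S_suf.
Proof. by rewrite /S_klm /S_pre /S_suf /block /w_klm -!catA. Qed.

Lemma size_w : size w = L.
Proof. by rewrite /w_klm !size_cat !size_nseq /=; lia. Qed.

Lemma size_block : size block = L.
Proof. by rewrite /block !size_cat !size_nseq; lia. Qed.

Lemma size_S_pre : size S_pre = k + 1 + L + l.
Proof. by rewrite /S_pre !size_cat !size_nseq /=; lia. Qed.

Lemma size_S n : size (S n) = (n + 3) * L.
Proof.
rewrite S_split size_cat size_S_pre size_cat size_pw size_block /S_suf size_cat.
by rewrite size_w size_nseq !mulnDl; lia.
Qed.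

Lemma weight_block : weight block = 0%Z.
Proof. by rewrite /block !weight_cat !weight_wa weight_wb Nat2Z.inj_succ; lia. Qed.

Lemma weight_S_pre : weight S_pre = (Z.of_nat m * C)%Z.
Proof. by rewrite /S_pre !weight_cat !weight_wa !weight_wb /=; lia. Qed.

Lemma weight_take_w s : s <= L ->
  (0 <= weight (take s w))%Z /\ (weight (take s w) = 0%Z -> s = 0 \/ s = L).
Proof.
move=> Hs; rewrite /w_klm (_ : [:: lb] = wb 1) //.
rewrite !weight_take_cat !size_nseq !weight_take_wa !weight_take_wb ?weight_cat.
by rewrite ?weight_wa ?weight_wb; repeat case: ifP => ?; split; nia.
Qed.

Lemma dyck_w : dyck M C w.
Proof.
move=> w1 w2 E.
have Hw1 : w1 = take (size w1) w by rewrite -E take_size_cat.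
have Hs : size w1 + size w2 = L by rewrite -size_w -E size_cat.
have [H1 H2] := @weight_take_w (size w1) (leq_trans (leq_addr _ _) (eq_leq Hs)).
rewrite Hw1; split=> // /H2 [] Hw1s; rewrite -Hw1; [left | right]; apply: size0nil => //.
by move: Hs; rewrite Hw1s; lia.
Qed.

Lemma w_unsorted : ~~ sorted leab w.
Proof.
by rewrite /w_klm /wa; case: l l_gt0 => // l' _; elim: k => //= k' IH; case: k' IH.
Qed.

Lemma weight_take_S_pre p : k + 1 < p -> p <= size S_pre ->
  (wmin < weight (take p S_pre))%Z.
Proof.
rewrite size_S_pre /S_pre (_ : [:: lb] = wb 1) // => Hp1 Hp2.
rewrite !weight_take_cat !size_nseq !weight_take_wa !weight_take_wb ?weight_cat.
by rewrite ?weight_wa ?weight_wb; repeat case: ifP => ?; nia.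
Qed.

Lemma weight_take_block s : s <= L ->
  (weight (take s block) <= - (M * Z.of_nat l))%Z -> s = k + m.+1.
Proof.
move=> Hs; rewrite /block !weight_take_cat !size_nseq !weight_take_wa !weight_take_wb.
by rewrite ?weight_wa ?weight_wb; repeat case: ifP => ?; nia.
Qed.

(* [P r] is the length of the prefix of [S_klm k l m n] ending with its r-th
   factor [a^k b^(m+1)], where the weight drops to [wmin]. *)
Local Notation P r := (k + 1 + (r + 1) * L).

Lemma P_succ r : P r.+1 = P r + L.
Proof. by rewrite addSn mulSn; lia. Qed.

Lemma ltn_P r : k + 1 < P r.
Proof. by rewrite -[X in X < _]addn0 ltn_add2l muln_gt0 !addn1. Qed.

Lemma leq_P x y : (P x <= P y) = (x <= y).
Proof. by rewrite leq_add2l leq_pmul2r ?addn1 // leq_add2r. Qed.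

Lemma wminE : (wmin = Z.of_nat m * C - M * Z.of_nat l)%Z.
Proof. ring. Qed.

Lemma Ml_gt0 : (0 < M * Z.of_nat l)%Z.
Proof. nia. Qed.

Lemma S_minima n p : k + 1 < p -> p <= P n.+1 ->
  (weight (take p (S n)) <= wmin)%Z -> exists2 x, 0 < x <= n & p = P x.
Proof.
move=> Hp1; rewrite P_succ => Hp2; rewrite S_split weight_take_cat.
case: ifP => [Hpre|/negbT]; first by have := weight_take_S_pre Hp1 Hpre; lia.
rewrite -ltnNge size_S_pre weight_S_pre wminE => Hpre Hw.
have Ml := Ml_gt0.
have Hp' := divn_eq (p - (k + 1 + L + l)) L.
have HL : 0 < L by rewrite addn1.
have Hs := ltn_pmod (p - (k + 1 + L + l)) HL.
move: Hp' Hs; set x := _ %/ L; set s := _ %% L; clearbody x s => Hp' Hs.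
have : x * L < n.+1 * L by rewrite mulSn; rewrite !mulnDl in Hp2; lia.
rewrite ltn_pmul2r // ltnS leq_eqVlt => /orP [/eqP Hxn|Hxn].
- rewrite Hp' -size_block (weight_take_pw _ _ weight_block) Hxn ?subnn // in Hw.
  have Hsl : s <= L - l by rewrite !mulnDl in Hp2; rewrite Hxn in Hp'; lia.
  have Hsw : s <= L := leq_trans Hsl (leq_subr _ _).
  have [Hnn _] := weight_take_w Hsw.
  rewrite /S_suf /= takel_cat ?size_w // in Hw.
  exfalso; lia.
- rewrite Hp' -size_block (weight_take_pw _ _ weight_block (ltnW Hxn)) in Hw.
  rewrite -(subnSK Hxn) pwS -catA weight_take_cat size_block (ltnW Hs) in Hw.
  have Hsx := weight_take_block (ltnW Hs) (ltac:(lia)).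
  by exists x.+1; [lia | rewrite mulSn !mulnDl; lia].
Qed.

Definition S_head r := S_pre ++ pw block r.-1 ++ wa k ++ wb m.+1.

Lemma S_split_head n r : 0 < r <= n -> S n = S_head r ++ wa l ++ pw block (n - r) ++ S_suf.
Proof.
case/andP=> Hr Hrn.
have En : n = r.-1 + (n - r).+1 by lia.
by rewrite S_split {1}En pwD pwS /S_head /block -!catA.
Qed.

Lemma size_S_head r : 0 < r -> size (S_head r) = k + 1 + (r + 1) * L.
Proof.
case: r => // r _; rewrite /S_head size_cat size_S_pre size_cat size_pw size_block.
by rewrite size_cat !size_nseq /= !mulnDl mulSn; lia.
Qed.

Lemma weight_S_head r : weight (S_head r) = wmin.
Proof.
rewrite /S_head weight_cat weight_S_pre !weight_cat weight_pw ?weight_block //.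
by rewrite weight_wa weight_wb Nat2Z.inj_succ; ring.
Qed.

Lemma S_head_succ r : 0 < r -> S_head r.+1 = S_head r ++ wa l ++ wa k ++ wb m.+1.
Proof.
by case: r => // r _; rewrite /S_head /= -addn1 pwD pwS /= cats0 /block -!catA.
Qed.

Lemma take_S_head n r : 0 < r <= n -> take (P r) (S n) = S_head r.
Proof.
move=> Hr; rewrite (S_split_head Hr) -size_S_head ?take_size_cat //.
by case/andP: Hr.
Qed.

Lemma weight_take_S_head n r : 0 < r <= n ->
  weight (take (P r) (S n)) = wmin.
Proof. by move=> Hr; rewrite take_S_head // weight_S_head. Qed.

Lemma S_gap n r : 0 < r < n ->
  drop (P r) (take (P r.+1) (S n)) = wa l ++ wa k ++ wb m.+1.
Proof.
case/andP=> Hr Hrn; rewrite take_S_head ?Hrn // S_head_succ //.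
by rewrite drop_size_cat // size_S_head.
Qed.

Lemma sorted_gap : sorted leab (wa l ++ wa k ++ wb m.+1).
Proof.
rewrite catA /wa -nseqD /wb.
elim: (l + k) => [|n IH]; first by elim: m.+1 => //= -[].
by case: n IH.
Qed.

Lemma gap_not_derivable : ~ derives [:: w] [::] (wa l ++ wa k ++ wb m.+1).
Proof.
case/(derives_from_nil_unsorted w_unsorted) => [/(congr1 size)|].
  by rewrite /= !size_cat !size_nseq; lia.
by rewrite sorted_gap.
Qed.

Section Embedding.

Variables (i j : nat) (q : nat -> nat).
Hypotheses (i_gt0 : 0 < i) (j_gt0 : 0 < j) (emb : embedding M C w (S i) (S j) q).

Lemma leq_q p : q p <= p.
Proof. by case: emb => q0 _ /(_ 0 p (leq0n p)) + _ _; rewrite q0 subn0 => /andP []. Qed.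

Lemma leq_ij : i <= j.
Proof.
case: emb => _ _ _ /(_ _ (leqnn _)) + _; rewrite subnn addn0 => /leq_trans /(_ (leq_q _)).
by rewrite !size_S leq_pmul2r ?addn1 // leq_add2r.
Qed.

Lemma weight_q_S_head r : 0 < r <= j ->
  (weight (take (q (P r)) (S i)) <= wmin)%Z.
Proof. by case: emb => _ Hw _ _ _ Hr; rewrite -(weight_take_S_head Hr). Qed.

Lemma q_S_head_bound r : 0 < r <= j -> q (P r) <= P i.+1.
Proof.
elim: r => // -[_ _|r IH /andP [_ Hrj]].
  by apply: leq_trans (leq_q _) _; rewrite leq_P.
have Hr : 0 < r.+1 <= j by rewrite (ltnW Hrj).
case: emb => _ _ /(_ (P r.+1) (P r.+2)) + _ _.
rewrite [P r.+2]P_succ leq_addr => /(_ isT) /andP [_]; rewrite addKn.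
move/leq_trans; apply.
case: (leqP (q (P r.+1)) (k + 1)) => Hq.
  by rewrite [P i.+1]P_succ leq_add2r; apply: leq_trans Hq _; rewrite leq_addr.
have [x /andP [_ Hxi] ->] := S_minima Hq (IH Hr) (weight_q_S_head Hr).
by rewrite -P_succ leq_P.
Qed.

Lemma q_S_head r : 0 < r <= j -> k + 1 < q (P r) -> exists2 x, 0 < x <= i & q (P r) = P x.
Proof. by move=> Hr Hq; apply: S_minima Hq (q_S_head_bound Hr) (weight_q_S_head Hr). Qed.

Lemma q_S_head_step r : 0 < r < j -> k + 1 < q (P r) -> q (P r) + L <= q (P r.+1).
Proof.
case/andP=> Hr Hrj Hq.
have Hr1 : 0 < r <= j by rewrite Hr ltnW.
have Hr2 : 0 < r.+1 <= j by rewrite Hrj.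
have HP : P r <= P r.+1 by rewrite leq_P.
case: emb => _ _ /(_ _ _ HP) /andP [Hle _] _ Hgap.
have [x Hx Ex] := q_S_head Hr1 Hq.
have [y _ Ey] := q_S_head Hr2 (leq_trans Hq Hle).
rewrite Ex Ey -P_succ leq_P; rewrite Ex Ey leq_P in Hle.
rewrite ltn_neqAle Hle andbT; apply/eqP => Exy.
apply: gap_not_derivable; rewrite -(@S_gap j r) ?Hr //.
apply: Hgap => //; first by rewrite Ex Ey Exy.
  by rewrite Ex !weight_take_S_head.
by rewrite !weight_take_S_head.
Qed.

Lemma q_S_head_lower : i < j -> k + 1 < q (P (j - i)).
Proof.
move=> Hij; have HiL := leq_mul (ltnW Hij) (leqnn L).
have HP : P (j - i) <= size (S j) by rewrite size_S !mulnDl mulnBl; lia.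
case: emb => _ _ _ /(_ _ HP) + _.
by rewrite !size_S !mulnDl mulnBl; lia.
Qed.

Lemma embedding_S_eq : i = j.
Proof.
apply/eqP; rewrite eqn_leq leq_ij leqNgt /=; apply/negP => Hij.
have Hr0 : 0 < j - i <= j by rewrite subn_gt0 Hij leq_subr.
have grow s : s <= i -> P s.+1 <= q (P (j - i + s)).
  elim: s => [_|s IH Hs].
    rewrite addn0; have [x /andP [Hx _] ->] := q_S_head Hr0 (q_S_head_lower Hij).
    by rewrite leq_P.
  have Hq : k + 1 < q (P (j - i + s)).
    exact: leq_trans (ltn_P _) (IH (ltnW Hs)).
  rewrite [j - i + s.+1]addnS; apply: leq_trans _ (q_S_head_step _ Hq); last by lia.
  by rewrite P_succ leq_add2r IH // ltnW.
have := grow i (leqnn i); rewrite subnK ?(ltnW Hij) // => Hj.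
have Hj' : 0 < j <= j by rewrite leqnn andbT.
have [x /andP [_ Hxi]] := q_S_head Hj' (leq_trans (ltn_P _) Hj).
by move=> Ex; rewrite Ex leq_P in Hj; lia.
Qed.

End Embedding.

End Words.

Theorem lemma7 (k l m : nat) :
  l < k -> 1 <= l -> 1 <= m ->
  forall i j : nat, 1 <= i -> 1 <= j ->
    (derives [:: w_klm k l m] (S_klm k l m i) (S_klm k l m j) <-> i = j).
Proof.
move=> lt_lk l_gt0 m_gt0 i j i_gt0 j_gt0; split=> [D|->]; last exact: rt_refl.
have Dw := dyck_w lt_lk l_gt0 m_gt0.
have [q emb] := tracked_embedding (tracked_derives Dw D (tracked_refl _ _ _ _)).
exact: embedding_S_eq emb.
Qed.
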